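(* Let $X$ be a random variable taking values in $\mathbb{R}_+$, and let $\mathbf{J}\in\mathbb{C}^{n\times n}$ be a Jordan block with eigenvalue $\lambda$, $\Re(\lambda)>0$. For $j\in\{1,\dots,n\}$ let $Z_j\sim\mathrm{Erlang}(j,\Re(\lambda))$ be independent of $X$, and let $Z_0=0$. Then for each $j\in\{1,\dots,n\}$, $$\big|\boldsymbol{\mathcal{L}}_X(\mathbf{J})_{1,j}\big|\le\Re(\lambda)^{1-j}\max\big(\mathbb{P}(Z_j>X),\mathbb{P}(Z_{j-1}>X)\big)\le\Re(\lambda)^{1-j}.$$
   Context: $\boldsymbol{\mathcal{L}}_X(\mathbf{J})=\mathbb{E}[\exp(-\mathbf{J}X)]$ (entrywise expectation of the matrix exponential). A Jordan block with eigenvalue $\lambda$ has $\lambda$ on the diagonal, ones on the first superdiagonal and zeros elsewhere. Erlang$(j,\mu)$ is the distribution of a sum of $j$ i.i.d. exponential random variables with rate $\mu$. *)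

From HB Require Import structures.
From mathcomp Require Import all_boot all_order all_algebra.
From mathcomp Require Import all_classical all_reals all_analysis.
From mathcomp Require Import complex.
Set Implicit Arguments. Unset Strict Implicit. Unset Printing Implicit Defensive.
Import Order.TTheory GRing.Theory Num.Theory.
Import numFieldNormedType.Exports.
Local Open Scope classical_set_scope.
Local Open Scope ring_scope.
Local Open Scope complex_scope.

Definition jordan_block {R : realType} (n : nat) (lam : R[i]) : 'M[R[i]]_n :=
  \matrix_(i < n, j < n)
    (if i == j then lam else if j == i.+1 :> nat then 1 else 0).

(* Matrix exponential, entrywise the limit of the partial sums of the
   exponential series  sum_k A^k / k!  (real and imaginary parts taken
   separately; the series always converges). *)
Definition expm {R : realType} (n : nat) (A : 'M[R[i]]_n) : 'M[R[i]]_n :=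
  \matrix_(i < n, j < n)
    Complex
      (lim ((fun N : nat => complex.Re ((\sum_(k < N) (k`!%:R)^-1 *: A ^+ k) i j)) @ \oo))
      (lim ((fun N : nat => complex.Im ((\sum_(k < N) (k`!%:R)^-1 *: A ^+ k) i j)) @ \oo)).

Definition cexpectation {d} {T : measurableType d} {R : realType}
  (P : probability T R) (f : T -> R[i]) : R[i] :=
  Complex (fine ('E_P[fun w => complex.Re (f w)])%E) (fine ('E_P[fun w => complex.Im (f w)])%E).

Definition mlaplace {d} {T : measurableType d} {R : realType}
  (P : probability T R) (X : T -> R) (n : nat) (J : 'M[R[i]]_n) : 'M[R[i]]_n :=
  \matrix_(i < n, j < n)
    cexpectation P (fun w => expm (- ((X w)%:C *: J)) i j).

Definition erlang_pdf {R : realType} (k : nat) (mu : R) (x : R) : R :=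
  if 0 <= x then mu ^+ k * x ^+ k.-1 * expR (- (mu * x)) / (k.-1)`!%:R else 0.

Definition is_erlang {d} {T : measurableType d} {R : realType}
  (P : probability T R) (Z : T -> R) (k : nat) (mu : R) : Prop :=
  forall A : set R, measurable A ->
    P (Z @^-1` A) = (\int[lebesgue_measure]_(x in A) (erlang_pdf k mu x)%:E)%E.

Definition indep_rv {d} {T : measurableType d} {R : realType}
  (P : probability T R) (X Y : T -> R) : Prop :=
  forall A B : set R, measurable A -> measurable B ->
    P (X @^-1` A `&` Y @^-1` B) = (P (X @^-1` A) * P (Y @^-1` B))%E.

From HB Require Import structures.
From mathcomp Require Import all_boot all_order all_algebra.
From mathcomp Require Import all_classical all_reals all_analysis.
From mathcomp Require Import measurable_realfun complex ring lra.
Set Implicit Arguments. Unset Strict Implicit. Unset Printing Implicit Defensive.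
Import Order.TTheory GRing.Theory Num.Theory.
Import numFieldNormedType.Exports.
Local Open Scope classical_set_scope.
Local Open Scope ring_scope.
Local Open Scope complex_scope.

Local Notation Re := complex.Re.
Local Notation Im := complex.Im.

(* The first row of exp(-xJ) is exp(-lam x) ((-x)^k / k!)_k, so with a = Re lam
   the (1, k+1) entry of L_X(J) has modulus at most E[X^k exp(-aX) / k!].
   For x >= 0, (ax)^k exp(-ax) / k! is the last term of
   P(Z_{k+1} > x) = sum_{m <= k} (ax)^m exp(-ax) / m!, and averaging over the
   independent X gives a^k E[X^k exp(-aX) / k!] <= P(Z_{k+1} > X). *)

Section ExpPartialSum.
Variable F : numFieldType.

Definition exp_psum (a : F) (M : nat) : F := \sum_(m < M) a ^+ m / m`!%:R.

Lemma exp_psumS a M : exp_psum a M.+1 = exp_psum a M + a ^+ M / M`!%:R.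
Proof. by rewrite /exp_psum big_ord_recr. Qed.

Lemma fact_neq0 k : (k`!%:R : F) != 0.
Proof. by rewrite pnatr_eq0 -lt0n fact_gt0. Qed.

Lemma exp_psumD_cauchy a b M :
  \sum_(p < M) a ^+ p / p`!%:R * exp_psum b (M - p) = exp_psum (a + b) M.
Proof.
elim: M => [|M IH]; first by rewrite /exp_psum !big_ord0.
rewrite exp_psumS -IH big_ord_recr /= subSnn.
under eq_bigr => p _ do rewrite subSn 1?ltnW // exp_psumS mulrDr.
rewrite big_split /= -!addrA; congr (_ + _).
rewrite [a + b]addrC exprDn mulr_suml big_ord_recr /= subnn binn expr0 mulr1n.
rewrite /exp_psum big_ord1 expr0 fact0 divr1 mulr1 mul1r; congr (_ + _).
apply: eq_bigr => p _; have pM : (p <= M)%N by exact: ltnW.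
rewrite -(bin_fact pM) !natrM -mulr_natr.
have := fact_neq0 p; have := fact_neq0 (M - p).
have : ('C(M, p)%:R : F) != 0 by rewrite pnatr_eq0 -lt0n bin_gt0.
by move=> h1 h2 h3; field; rewrite h1 h2 h3.
Qed.

Lemma exp_psumM_subD a b M : exp_psum a M * exp_psum b M - exp_psum (a + b) M =
  \sum_(p < M) a ^+ p / p`!%:R * \sum_(M - p <= q < M) b ^+ q / q`!%:R.
Proof.
rewrite -exp_psumD_cauchy mulr_suml -sumrB; apply: eq_bigr => p _.
rewrite -mulrBr /exp_psum -!(big_mkord xpredT (fun q => b ^+ q / q`!%:R)).
by rewrite (@big_cat_nat _ _ _ (M - p) 0 M) ?leq_subr //= addrAC subrr add0r.
Qed.

Lemma norm_exp_psum_term (a : F) q : `|a ^+ q / q`!%:R| = `|a| ^+ q / q`!%:R.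
Proof. by rewrite normrM normrX normfV normr_nat. Qed.

Lemma norm_exp_psumM_subD a b M :
  `|exp_psum a M * exp_psum b M - exp_psum (a + b) M| <=
  exp_psum `|a| M * exp_psum `|b| M - exp_psum (`|a| + `|b|) M.
Proof.
rewrite !exp_psumM_subD; apply: le_trans (ler_norm_sum _ _ _) _.
apply: ler_sum => p _; rewrite normrM norm_exp_psum_term.
apply: ler_wpM2l; first by rewrite divr_ge0 ?exprn_ge0.
apply: le_trans (ler_norm_sum _ _ _) _.
by apply: ler_sum => q _; rewrite norm_exp_psum_term.
Qed.

End ExpPartialSum.

Lemma cvg0_le (R : realType) (e D : nat -> R) :
  (forall M, `|e M| <= D M) -> D M @[M --> \oo] --> 0 -> e M @[M --> \oo] --> 0.
Proof.
move=> eD /cvgr0Pnorm_le D0; apply/cvgr0Pnorm_le => eps eps0.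
near=> M; apply: le_trans (eD M) (le_trans (ler_norm _) _).
by near: M; exact: D0.
Unshelve. all: end_near.
Qed.

Section ComplexExp.
Variable R : realType.
Implicit Types (u v : R) (z : R[i]).

Definition cexp z : R[i] :=
  (expR (Re z) * cos (Im z)) +i* (expR (Re z) * sin (Im z)).

Lemma normc_cexp z : `|cexp z| = (expR (Re z))%:C.
Proof.
rewrite normc_def /= !exprMn -mulrDr cos2Dsin2 mulr1 sqrtr_sqr.
by rewrite ger0_norm ?expR_ge0.
Qed.

Lemma normc_le_Re_Im z (r : R) :
  `|z| <= r%:C -> `|Re z| <= r /\ `|Im z| <= r.
Proof.
rewrite normc_def lecR => zr.
by split; apply: le_trans zr; rewrite -sqrtr_sqr ler_wsqrtr // ?lerDl ?lerDr sqr_ge0.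
Qed.

Lemma ReMc (r : R) z : Re (r%:C * z) = r * Re z.
Proof. by case: z => a b /=; rewrite mul0r subr0. Qed.

Lemma ImMc (r : R) z : Im (r%:C * z) = r * Im z.
Proof. by case: z => a b /=; rewrite mul0r addr0. Qed.

Lemma exp_psumC u M : exp_psum u%:C M = (exp_psum u M)%:C.
Proof.
rewrite /exp_psum rmorph_sum; apply: eq_bigr => m _.
by rewrite rmorphM rmorphXn fmorphV rmorph_nat.
Qed.

Lemma cvg_exp_psum_real u : exp_psum u M @[M --> \oo] --> expR u.
Proof.
suff -> : exp_psum u = series (exp_coeff u) by exact: is_cvg_series_exp_coeff.
apply/funext => M; rewrite /series /= big_mkord; apply: eq_bigr => m _.
by rewrite exp_coeffE mulrC.
Qed.

Lemma expr_i m : 'i ^+ m =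
  ((~~ odd m)%:R * (-1) ^+ m./2) +i* ((odd m)%:R * (-1) ^+ m.-1./2) :> R[i].
Proof.
rewrite -[in LHS](odd_double_half m) exprD -mul2n exprM sqr_i.
have -> : (-1 : R[i]) ^+ m./2 = ((-1) ^+ m./2)%:C by rewrite rmorphXn rmorphN1.
case/boolP: (odd m) => om /=; last by simpc.
have -> : m.-1./2 = m./2 by rewrite -[in LHS](odd_double_half m) om add1n /= doubleK.
by simpc.
Qed.

Lemma exp_psum_imag v M :
  exp_psum (0 +i* v) M = series (cos_coeff v) M +i* series (sin_coeff v) M.
Proof.
have -> : 0 +i* v = 'i * v%:C by simpc.
rewrite /exp_psum /series /= !big_mkord; apply/eqP; rewrite eq_complex.
rewrite (raddf_sum (@Re R)) (raddf_sum (@Im R)) /=; apply/andP; split.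
all: apply/eqP/eq_bigr => m _.
all: have -> : ('i * v%:C) ^+ m / m`!%:R = (v ^+ m / m`!%:R)%:C * 'i ^+ m.
all: try by rewrite exprMn rmorphM rmorphXn fmorphV rmorph_nat [RHS]mulrC mulrA.
all: by rewrite ?ReMc ?ImMc expr_i /= ?cos_coeffE ?sin_coeffE; ring.
Qed.

(* [exp_psum (u +i* v)] differs from [exp_psum u * exp_psum (0 +i* v)] by a
   Cauchy-product defect, dominated by the real defect for [|u|] and [|v|],
   which tends to [expR |u| * expR |v| - expR (|u| + |v|) = 0]. *)
Lemma cvg_exp_psum z :
  Re (exp_psum z M) @[M --> \oo] --> Re (cexp z) /\
  Im (exp_psum z M) @[M --> \oo] --> Im (cexp z).
Proof.
case: z => u v; set z := u +i* v.
have zE : z = u%:C + 0 +i* v by simpc.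
pose err M := exp_psum u%:C M * exp_psum (0 +i* v) M - exp_psum z M.
pose nu := Num.sqrt (u ^+ 2 + 0 ^+ 2); pose nv := Num.sqrt (0 ^+ 2 + v ^+ 2).
pose D M := exp_psum nu M * exp_psum nv M - exp_psum (nu + nv) M.
have errD M : `|err M| <= (D M)%:C.
  rewrite /err zE; apply: le_trans (norm_exp_psumM_subD _ _ _) _.
  by rewrite !normc_def /= -rmorphD !exp_psumC -rmorphM -rmorphB.
have D0 : D M @[M --> \oo] --> 0.
  rewrite -(subrr (expR (nu + nv))) [X in _ --> X - _]expRD.
  by apply: cvgB; [apply: cvgM|]; exact: cvg_exp_psum_real.
have errP M := normc_le_Re_Im (errD M).
have eE M : exp_psum z M = (exp_psum u M)%:C * exp_psum (0 +i* v) M - err M.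
  by rewrite /err exp_psumC opprB addrC subrK.
split.
- have -> : (fun M => Re (exp_psum z M)) =
            (fun M => exp_psum u M * series (cos_coeff v) M - Re (err M)).
    by apply/funext => M; rewrite eE raddfB /= ReMc exp_psum_imag.
  rewrite -[X in _ --> X]subr0; apply: cvgB; last first.
    by apply: (cvg0_le _ D0) => M; case: (errP M).
  apply: cvgM; first exact: cvg_exp_psum_real.
  by rewrite cos.unlock; exact: is_cvg_series_cos_coeff.
- have -> : (fun M => Im (exp_psum z M)) =
            (fun M => exp_psum u M * series (sin_coeff v) M - Im (err M)).
    by apply/funext => M; rewrite eE raddfB /= ImMc exp_psum_imag.
  rewrite -[X in _ --> X]subr0; apply: cvgB; last first.
    by apply: (cvg0_le _ D0) => M; case: (errP M).
  apply: cvgM; first exact: cvg_exp_psum_real.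
  by rewrite sin.unlock; exact: is_cvg_series_sin_coeff.
Qed.

End ComplexExp.

Section JordanBlock.
Variables (R : realType) (n : nat) (lam : R[i]).
Local Notation J := (jordan_block n lam).

Lemma mulmx_jordan_block p (A : 'M[R[i]]_(p, n)) i j :
  (A *m J) i j = A i j * lam + \sum_(k < n | k.+1 == j :> nat) A i k.
Proof.
rewrite mxE (bigD1 j) //= mxE eqxx; congr (_ + _).
rewrite [RHS]big_mkcond [LHS]big_mkcond; apply: eq_bigr => k _ /=; rewrite mxE.
have [->|kj] := eqVneq k j; first by rewrite gtn_eqF.
by rewrite eq_sym; case: ifP; rewrite ?mulr1 ?mulr0.
Qed.

Lemma jordan_block_expr_row0 (r0 : 'I_n) m j : val r0 = 0%N ->
  (J ^+ m) r0 j = lam ^+ (m - j) *+ 'C(m, j).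
Proof.
move=> r00; elim: m j => [|m IH] j.
  by rewrite expr0 mxE bin0n -val_eqE r00 eq_sym; case: (_ == _).
rewrite exprSr -mulmxE mulmx_jordan_block IH.
case: j => [[|j] ltjn] /=.
  by rewrite big_pred0 // addr0 !subn0 !bin0 !mulr1n exprSr.
rewrite (big_pred1 (Ordinal (ltnW ltjn))) => [/=|k]; last by rewrite eqSS.
rewrite IH binS mulrnDr subSS; congr (_ + _).
have [ltjm|lemj] := ltnP j m; first by rewrite mulrnAl -exprSr -subSn // subSS.
by rewrite bin_small // !mulr0n mul0r.
Qed.

Lemma exprZ_mx (a : R[i]) (A : 'M[R[i]]_n) k : (a *: A) ^+ k = a ^+ k *: A ^+ k.
Proof.
elim: k => [|k IH]; first by rewrite !expr0 scale1r.
by rewrite !exprSr IH -!mulmxE -scalemxAl -scalemxAr scalerA.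
Qed.

Lemma exp_psum_jordan_row0 (r0 j : 'I_n) (x : R) N :
  val r0 = 0%N -> (j <= N)%N ->
  (\sum_(k < N) (k`!%:R)^-1 *: (- (x%:C *: J)) ^+ k) r0 j =
  ((- x) ^+ j / j`!%:R)%:C * exp_psum ((- x)%:C * lam) (N - j).
Proof.
move=> r00 lejN; rewrite summxE.
under eq_bigr do rewrite -scaleNr exprZ_mx !mxE jordan_block_expr_row0 //.
pose F k := (k`!%:R)^-1 * ((- x%:C) ^+ k * (lam ^+ (k - j) *+ 'C(k, j))).
rewrite -(big_mkord xpredT F) (@big_cat_nat _ _ _ j 0 N) //= big_nat_cond.
rewrite big1 ?add0r => [|k /andP[/andP[_ ltkj] _]]; last first.
  by rewrite /F bin_small // mulr0n !mulr0.
rewrite -{1}(add0n j) big_addn big_mkord /exp_psum mulr_sumr.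
apply: eq_bigr => i _; rewrite /F.
have := fact_neq0 R[i] i; have := fact_neq0 R[i] j.
have : ('C(i + j, j)%:R : R[i]) != 0 by rewrite pnatr_eq0 -lt0n bin_gt0 leq_addl.
rewrite addnK; have := bin_fact (leq_addl i j); rewrite addnK => <-.
have -> : ((- x) ^+ j / j`!%:R)%:C = (- x%:C) ^+ j / j`!%:R :> R[i].
  by rewrite rmorphM rmorphXn rmorphN fmorphV rmorph_nat.
rewrite rmorphN exprD exprMn !natrM => hC hj hi.
by field; rewrite hi hj hC.
Qed.

Lemma expm_jordan_row0 (r0 j : 'I_n) (x : R) : val r0 = 0%N ->
  expm (- (x%:C *: J)) r0 j = ((- x) ^+ j / j`!%:R)%:C * cexp ((- x)%:C * lam).
Proof.
move=> r00; have [cvgRe cvgIm] := cvg_exp_psum ((- x)%:C * lam).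
rewrite /expm mxE; apply/eqP; rewrite eq_complex ReMc ImMc.
apply/andP; split; apply/eqP; apply: cvg_lim => //; rewrite -(cvg_shiftn j).
- under eq_fun do rewrite exp_psum_jordan_row0 ?leq_addl // addnK ReMc.
  by apply: cvgM => //; exact: cvg_cst.
- under eq_fun do rewrite exp_psum_jordan_row0 ?leq_addl // addnK ImMc.
  by apply: cvgM => //; exact: cvg_cst.
Qed.

End JordanBlock.

Lemma cauchy_schwarz2 (R : rcfType) (a b x y : R) :
  a * x + b * y <= Num.sqrt (a ^+ 2 + b ^+ 2) * Num.sqrt (x ^+ 2 + y ^+ 2).
Proof.
rewrite -sqrtrM ?addr_ge0 ?sqr_ge0 //; apply: le_trans (ler_norm _) _.
rewrite -sqrtr_sqr ler_wsqrtr // -subr_ge0.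
have -> : (a ^+ 2 + b ^+ 2) * (x ^+ 2 + y ^+ 2) - (a * x + b * y) ^+ 2 =
          (a * y - b * x) ^+ 2 by ring.
exact: sqr_ge0.
Qed.

Lemma le_Lfun1 d (T : measurableType d) (R : realType) (mu : {measure set T -> \bar R})
    (f g : T -> R) :
  measurable_fun setT f -> (forall w, `|f w| <= g w) -> g \in Lfun mu 1 ->
  f \in Lfun mu 1.
Proof.
move=> mf fg /Lfun1_integrable Lg; apply/Lfun1_integrable.
apply: le_integrable Lg => //; first exact/measurable_EFinP.
by move=> w _; rewrite /comp !abse_EFin lee_fin (le_trans (fg w) (ler_norm _)).
Qed.

Section Expectation.
Context d (T : measurableType d) (R : realType) (P : probability T R).

Lemma fine_probability_le1 (A : set T) : measurable A -> fine (P A) <= 1.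
Proof. by move=> mA; rewrite -lee_fin fineK ?fin_num_measure ?probability_le1. Qed.

(* With [A +i* B] the expectation of [f] and [rho] its modulus,
   [rho ^+ 2 = E[A * Re f + B * Im f] <= rho * E[g]] by Cauchy-Schwarz. *)
Lemma norm_cexpectation_le (f : T -> R[i]) (g : T -> R) :
  measurable_fun setT (fun w => Re (f w)) ->
  measurable_fun setT (fun w => Im (f w)) ->
  g \in Lfun P 1 -> (forall w, `|f w| <= (g w)%:C) ->
  `|cexpectation P f| <= (fine ('E_P[g])%E)%:C.
Proof.
move=> mRe mIm Lg fg.
have LRe : (fun w => Re (f w)) \in Lfun P 1.
  by apply: (le_Lfun1 mRe _ Lg) => w; case: (normc_le_Re_Im (fg w)).
have LIm : (fun w => Im (f w)) \in Lfun P 1.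
  by apply: (le_Lfun1 mIm _ Lg) => w; case: (normc_le_Re_Im (fg w)).
have g0 w : 0 <= g w by rewrite -ler0c (le_trans _ (fg w)).
rewrite /cexpectation normc_def lecR /=.
set A := fine _; set B := fine _; set G := fine ('E_P[g])%E.
have EA : ('E_P[fun w => Re (f w)] = A%:E)%E by rewrite fineK ?expectation_fin_num.
have EB : ('E_P[fun w => Im (f w)] = B%:E)%E by rewrite fineK ?expectation_fin_num.
have EG : ('E_P[g] = G%:E)%E by rewrite fineK ?expectation_fin_num.
set rho := Num.sqrt _.
have rho2 : rho ^+ 2 = A * A + B * B by rewrite sqr_sqrtr ?addr_ge0 ?sqr_ge0 // !expr2.
have rho2_le : rho ^+ 2 <= rho * G.
  pose h := rho \o* g \- (A \o* (fun w => Re (f w)) \+ B \o* (fun w => Im (f w))).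
  have : (0 <= 'E_P[h])%E.
    apply: expectation_ge0 => w /=; rewrite subr_ge0.
    apply: le_trans (cauchy_schwarz2 _ _ _ _) _.
    apply: ler_wpM2r; first exact: sqrtr_ge0.
    by move: (fg w); rewrite normc_def lecR.
  rewrite /h expectationB ?rpredD ?Lfun_scale // expectationD ?Lfun_scale //.
  by rewrite !expectationZl // EA EB EG -!EFinM -EFinD lee_fin subr_ge0 rho2.
have [->|rho_neq0] := eqVneq rho 0; first exact/fine_ge0/expectation_ge0.
have rho_gt0 : 0 < rho by rewrite lt_neqAle eq_sym rho_neq0 sqrtr_ge0.
by rewrite -(ler_pM2l rho_gt0) -expr2.
Qed.

End Expectation.

Section ErlangTail.
Variable R : realType.
Implicit Types (a x : R) (k : nat).

(* [a ^+ k.+1 * erlang_weight a k] is the Erlang(k+1, a) density on [0, +oo[,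
   and [a ^+ k * erlang_weight a k x] is the Poisson(a x) weight of k. *)
Definition erlang_weight a k x : R := x ^+ k / k`!%:R * expR (- (a * x)).

Lemma erlang_weight_ge0 a k x : 0 <= x -> 0 <= erlang_weight a k x.
Proof. by move=> x0; rewrite /erlang_weight !mulr_ge0 ?exprn_ge0 ?expR_ge0. Qed.

Lemma erlang_weight_le a k x : 0 < a -> 0 <= x -> a ^+ k * erlang_weight a k x <= 1.
Proof.
move=> a0 x0; have ax0 : 0 <= a * x by rewrite mulr_ge0 // ltW.
have powk_le : (a * x) ^+ k / k`!%:R <= expR (a * x).
  case: k => [|k]; first by rewrite expr0 fact0 divr1 -expR0 ler_expR.
  by apply: le_trans (expR_ge1Dxn k ax0); rewrite lerDr.
have -> : a ^+ k * erlang_weight a k x = (a * x) ^+ k / k`!%:R * expR (- (a * x)).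
  by rewrite /erlang_weight exprMn; ring.
by rewrite -[leRHS](expRxMexpNx_1 (a * x)) ler_wpM2r ?expR_ge0.
Qed.

Lemma measurable_erlang_weight a k : measurable_fun setT (erlang_weight a k).
Proof.
apply: measurable_funM; first by apply: measurable_funM => //; exact: measurable_funX.
by apply: measurableT_comp => //; apply: measurableT_comp.
Qed.

Lemma exponential_tail a x : 0 < a -> 0 <= x ->
  (\int[lebesgue_measure]_(y in `]x, +oo[) (exponential_pdf a y)%:E =
   (expR (- a * x))%:E)%E.
Proof.
move=> a0 x0.
have cexpNM : continuous (fun z : R => expR (- a * z)).
  move=> z; apply: continuous_comp; last exact: continuous_expR.
  by apply: continuousM => //; apply: (@continuousN _ R^o); exact: cst_continuous.
rewrite integral_itv_obnd_cbnd; last first.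
  by apply/measurable_funTS/measurable_EFinP; exact: measurable_exponential_pdf.
rewrite (@ge0_continuous_FTC2y _ _ (fun y => - expR (- a * y)) _ 0).
- by rewrite sub0e EFinN oppeK.
- by move=> y _; apply: exponential_pdf_ge0; exact: ltW.
- apply: (@continuous_subspaceW R^o _ _ [set` `[0, +oo[%R]).
    by apply: subset_itvr; rewrite bnd_simp.
  exact: within_continuous_exponential_pdf.
- rewrite -oppr0; apply: cvgN.
  rewrite (_ : (fun y => expR (- a * y)) = (fun z => expR (- z)) \o ( *%R a)).
    apply: (@cvg_comp _ _ _ _ _ _ (pinfty_nbhs R)); last exact: cvgr_expR.
    exact: gt0_cvgMry.
  by apply: eq_fun => y; rewrite mulNr.
- by move=> y _; exact: ex_derive.
- by apply: cvgN; apply/cvg_at_right_filter; exact: cexpNM.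
- move=> y; rewrite in_itv/= andbT => xy.
  by apply: derive1_exponential_pdf; rewrite in_itv/= andbT (le_lt_trans x0 xy).
Qed.

(* On [y > x], the Erlang(k+1, a) density dominates
   [(a x)^k / k! * exponential_pdf a y]. *)
Lemma erlang_tail_ge a x k : 0 < a -> 0 <= x ->
  ((a ^+ k * erlang_weight a k x)%:E <=
   \int[lebesgue_measure]_(y in `]x, +oo[) (erlang_pdf k.+1 a y)%:E)%E.
Proof.
move=> a0 x0; set c := (a * x) ^+ k / k`!%:R.
have c0 : 0 <= c by rewrite divr_ge0 // exprn_ge0 // mulr_ge0 // ltW.
have -> : a ^+ k * erlang_weight a k x = c * expR (- a * x).
  by rewrite /erlang_weight /c mulNr exprMn; ring.
have mexp : measurable_fun `]x, +oo[ (fun y => (exponential_pdf a y)%:E).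
  by apply/measurable_funTS/measurable_EFinP; exact: measurable_exponential_pdf.
rewrite EFinM -exponential_tail // -ge0_integralZl //; last first.
  by move=> y _; rewrite lee_fin exponential_pdf_ge0 // ltW.
apply: ge0_le_integral => //.
- by move=> y _; rewrite lee_fin mulr_ge0 // exponential_pdf_ge0 // ltW.
- by apply/measurable_funTS/measurable_EFinP/measurable_funM => //;
    exact: measurable_exponential_pdf.
- pose pdf y := (a ^+ k.+1 * y ^+ k * expR (- (a * y)) / k`!%:R)%:E.
  apply: (eq_measurable_fun pdf).
    move=> y; rewrite inE /= in_itv /= andbT => xy.
    by rewrite /erlang_pdf ifT // (le_trans x0 (ltW xy)).
  apply/measurable_funTS/measurable_EFinP/measurable_funM => //.
  apply: measurable_funM; first by apply: measurable_funM => //; exact: measurable_funX.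
  by apply: measurableT_comp => //; apply: measurableT_comp => //; exact: measurable_funM.
- move=> y; rewrite /= in_itv /= andbT => xy; have y0 := le_trans x0 (ltW xy).
  rewrite /erlang_pdf ifT //= -EFinM lee_fin exponential_pdfE // /c mulNr.
  have : x ^+ k <= y ^+ k by rewrite lerXn2r // ?nnegrE // ltW.
  have : 0 <= a ^+ k.+1 * expR (- (a * y)) / k`!%:R.
    by rewrite !mulr_ge0 ?exprn_ge0 ?expR_ge0 ?ltW.
  rewrite exprMn exprS; nra.
Qed.

End ErlangTail.

Lemma measurable_lt_pair (R : realType) : measurable [set p : R * R | p.1 < p.2].
Proof.
have := measurable_fun_ltr (@measurable_fst _ _ R R) (@measurable_snd _ _ R R).
move=> /(_ measurableT [set true] I); rewrite setTI.
by congr measurable; apply/funext => p /=; apply/propext; split => [->|].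
Qed.

Section IndependentComparison.
Context d (T : measurableType d) (R : realType) (P : probability T R).
Variables X Z : {RV P >-> R}.

Definition pairRV : T -> R * R := fun w => (X w, Z w).

HB.instance Definition _ :=
  isMeasurableFun.Build _ _ _ _ pairRV
    (measurable_fun_pair (measurable_funPT X) (measurable_funPT Z)).

Lemma measurable_RV_lt : measurable [set w | X w < Z w].
Proof.
have := measurable_funPT pairRV measurableT _ (@measurable_lt_pair R).
by rewrite setTI.
Qed.

Lemma probability_lt_indep : indep_rv P X Z ->
  P [set w | X w < Z w] = (\int[P]_w ccdf Z (X w))%E.
Proof.
move=> XZ; pose S := [set p : R * R | p.1 < p.2].
transitivity (distribution P pairRV S) => //.
rewrite -(@product_measure_unique _ _ _ _ _ (distribution P X) (distribution P Z)
  (distribution P pairRV) _ S (@measurable_lt_pair R)); last first.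
  by move=> A B mA mB; rewrite /distribution /pushforward -XZ.
transitivity (\int[distribution P X]_x ccdf Z x)%E.
  apply: eq_integral => x _; congr (distribution P Z _).
  by apply/funext => y; rewrite /xsection /= in_setE in_itv /= andbT.
by rewrite ge0_integral_distribution //; exact: ccdf_measurable.
Qed.

Lemma Lfun1_erlang_weight (a : R) k : 0 < a -> (forall w, 0 <= X w) ->
  erlang_weight a k \o X \in Lfun P 1.
Proof.
move=> a0 X0; have ak0 := exprn_gt0 k a0.
apply: (@le_Lfun1 _ _ _ P _ (cst (a ^- k))) => [|w|].
- exact: measurableT_comp (measurable_erlang_weight a k) (measurable_funPT X).
- rewrite ger0_norm ?erlang_weight_ge0 // -(ler_pM2l ak0) divff ?gt_eqF //.
  exact: erlang_weight_le.
- exact: Lfun_cst.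
Qed.

Lemma expectation_erlang_weight_le (a : R) k : 0 < a -> (forall w, 0 <= X w) ->
  is_erlang P Z k.+1 a -> indep_rv P X Z ->
  a ^+ k * fine 'E_P[erlang_weight a k \o X] <= fine (P [set w | X w < Z w]).
Proof.
move=> a0 X0 erlZ XZ.
have mw := measurableT_comp (measurable_erlang_weight a k) (measurable_funPT X).
have Lw := Lfun1_erlang_weight k a0 X0.
have mXZ := measurable_RV_lt.
rewrite -lee_fin EFinM fineK ?expectation_fin_num // fineK ?fin_num_measure //.
rewrite -expectationZl // probability_lt_indep // unlock.
apply: ge0_le_integral => //.
- by move=> w _; rewrite lee_fin /= mulr_ge0 ?erlang_weight_ge0 // exprn_ge0 // ltW.
- by apply/measurable_EFinP; exact: measurable_funM.
- exact: measurableT_comp (ccdf_measurable Z) (measurable_funPT X).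
- move=> w _; rewrite /= mulrC /ccdf /distribution /pushforward erlZ //.
  exact: erlang_tail_ge.
Qed.

End IndependentComparison.

Section JordanLaplace.
Variables (R : realType) (n : nat) (lam : R[i]) (r0 j : 'I_n).
Hypothesis r00 : val r0 = 0%N.
Local Notation J := (jordan_block n lam).

Lemma norm_expm_jordan_row0 (x : R) : 0 <= x ->
  `|expm (- (x%:C *: J)) r0 j| = (erlang_weight (Re lam) j x)%:C.
Proof.
move=> x0; rewrite expm_jordan_row0 // normrM normc_cexp ReMc.
rewrite normc_def /= expr0n addr0 sqrtr_sqr normrM normrX normrN normfV normr_nat.
by rewrite ger0_norm // -rmorphM mulNr (mulrC x).
Qed.

Lemma measurable_expm_jordan_row0 :
  measurable_fun setT (fun x : R => Re (expm (- (x%:C *: J)) r0 j)) /\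
  measurable_fun setT (fun x : R => Im (expm (- (x%:C *: J)) r0 j)).
Proof.
have mlin (c : R) : measurable_fun setT (fun x : R => - x * c).
  by apply: measurable_funM => //; exact: measurable_funN.
have mpow : measurable_fun setT (fun x : R => (- x) ^+ j / j`!%:R).
  by apply: measurable_funM => //; apply: measurable_funX; exact: measurable_funN.
have mexp : measurable_fun setT (fun x : R => expR (- x * Re lam)).
  by apply: measurableT_comp; [exact: measurable_expR | exact: mlin].
split.
- under eq_fun do rewrite expm_jordan_row0 // ReMc /cexp /= ReMc ImMc.
  apply: measurable_funM => //; apply: measurable_funM => //.
  exact: measurableT_comp (continuous_measurable_fun (@continuous_cos R)) (mlin _).
- under eq_fun do rewrite expm_jordan_row0 // ImMc /cexp /= ReMc ImMc.
  apply: measurable_funM => //; apply: measurable_funM => //.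
  exact: measurableT_comp (continuous_measurable_fun (@continuous_sin R)) (mlin _).
Qed.

End JordanLaplace.

Theorem lemma3 (R : realType) (d : measure_display) (T : measurableType d)
  (P : probability T R) (X : {RV P >-> R}) (Z : nat -> {RV P >-> R})
  (n : nat) (lam : R[i]) :
  (forall w, 0 <= X w) ->
  0 < complex.Re lam ->
  (forall w, Z 0%N w = 0) ->
  (forall j : nat, (1 <= j <= n)%N ->
     is_erlang P (Z j) j (complex.Re lam) /\ indep_rv P X (Z j)) ->
  forall (r0 j : 'I_n), val r0 = 0%N ->
    let L := mlaplace P X (jordan_block n lam) r0 j in
    let b := (complex.Re lam) ^- j * Num.max (fine (P [set w | X w < Z j.+1 w]))
                                       (fine (P [set w | X w < Z j w])) in
    `|L| <= b%:C /\ b <= (complex.Re lam) ^- j.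
Proof.
(* Only [Z j.+1] is used: the maximum with the [Z j] term merely weakens the bound. *)
move=> X0 a0 _ hZ r0 j r00 L b; set a := Re lam.
have [erlZ indepZ] := hZ j.+1 (ltn_ord j).
have ainv_gt0 : 0 < a ^- j by rewrite invr_gt0 exprn_gt0.
split; last first.
  rewrite -[leRHS]mulr1 ler_pM2l // ge_max.
  by apply/andP; split; apply: fine_probability_le1; exact: measurable_RV_lt.
have [mRe mIm] := measurable_expm_jordan_row0 lam j r00.
rewrite /L mxE.
apply: le_trans (norm_cexpectation_le (g := erlang_weight a j \o X) _ _ _ _) _.
- exact: measurableT_comp mRe (measurable_funPT X).
- exact: measurableT_comp mIm (measurable_funPT X).
- exact: Lfun1_erlang_weight.
- by move=> w; rewrite norm_expm_jordan_row0.
rewrite lecR; apply: (@le_trans _ _ (a ^- j * fine (P [set w | X w < Z j.+1 w]))).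
  rewrite -(ler_pM2l (exprn_gt0 j a0)) mulVKf ?gt_eqF ?exprn_gt0 //.
  exact: expectation_erlang_weight_le.
by rewrite /b ler_pM2l // le_max lexx.
Qed.
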